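(* Let $G$ be a finite abstract simplicial complex. Then $$\sum_{x \in G} w(x)\, w(U(x)) = w(G).$$
   Context: A finite abstract simplicial complex $G$ is a finite set of non-empty finite sets such that every non-empty subset of an element of $G$ is again in $G$. For $x \in G$, $\dim(x)=|x|-1$ and $w(x)=(-1)^{\dim(x)}$. For a subset $A\subset G$, $w(A)=\sum_{x\in A} w(x)$ (the Euler characteristic of $A$), and in particular $w(G)=\sum_{x\in G}w(x)$. The star of $x\in G$ is $U(x)=\{y \in G : x \subset y\}$. *)

From mathcomp Require Import all_boot all_order all_algebra.
Set Implicit Arguments. Unset Strict Implicit. Unset Printing Implicit Defensive.
Import GRing.Theory Num.Theory.
Local Open Scope ring_scope.

Definition is_complex (T : finType) (G : {set {set T}}) : Prop :=
  (forall x, x \in G -> x != set0) /\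
  (forall x y : {set T}, x \in G -> y \subset x -> y != set0 -> y \in G).

(* dim x = |x| - 1, w(x) = (-1)^dim x *)
Definition w (T : finType) (x : {set T}) : int := (-1) ^+ (#|x|.-1).

Definition wS (T : finType) (A : {set {set T}}) : int := \sum_(x in A) w x.

Definition star (T : finType) (G : {set {set T}}) (x : {set T}) : {set {set T}} :=
  [set y in G | x \subset y].

(* Exchanging the two sums turns the left-hand side into
   sum_(y in G) w(y) * sum_(x in G, x \subset y) w(x).  The faces of y lying in
   G are exactly the non-empty subsets of y, and the signed count of all
   subsets of a non-empty set y is (1 - 1)^|y| = 0, so each inner sum is 1. *)

From mathcomp Require Import all_boot all_order all_algebra.
Set Implicit Arguments. Unset Strict Implicit. Unset Printing Implicit Defensive.
Import GRing.Theory Num.Theory.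
Local Open Scope ring_scope.

Section SubsetSums.
Variable T : finType.

Lemma sum_subset_card (V : nmodType) (B : {set T}) (F : nat -> V) :
  \sum_(A : {set T} | A \subset B) F #|A| = \sum_(k < #|B|.+1) F k *+ 'C(#|B|, k).
Proof.
rewrite (partition_big (fun A : {set T} => inord #|A| : 'I_#|B|.+1) xpredT) //=.
apply: eq_bigr => k _; rewrite -cards_draws -sumr_const.
apply: eq_big => [A | A /andP[AB /eqP <-]]; last by rewrite inordK // ltnS subset_leq_card.
rewrite inE; case: (boolP (A \subset B)) => //= AB.
by rewrite -val_eqE /= inordK // ltnS subset_leq_card.
Qed.

Lemma sum_subset_sign_eq0 (R : pzRingType) (B : {set T}) :
  B != set0 -> \sum_(A : {set T} | A \subset B) (-1) ^+ #|A| = 0 :> R.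
Proof.
rewrite -card_gt0 lt0n => /negbTE B_neq0.
transitivity ((1 - 1 : R) ^+ #|B|); last by rewrite subrr expr0n B_neq0.
rewrite (sum_subset_card _ (fun n => (-1) ^+ n)) exprBn_comm; last exact: commr1.
by apply: eq_bigr => k _; rewrite !expr1n !mulr1.
Qed.

End SubsetSums.

Lemma w_nonempty (T : finType) (x : {set T}) : x != set0 -> w x = - (-1) ^+ #|x|.
Proof.
rewrite -card_gt0 /w; case: #|x| => // n _.
by rewrite exprS mulN1r opprK.
Qed.

Section Faces.
Variables (T : finType) (G : {set {set T}}).
Hypothesis complexG : is_complex G.

Lemma complex_subsetE (y : {set T}) : y \in G ->
  forall x, (x \in G) && (x \subset y) = (x \subset y) && (x != set0).
Proof.
case: complexG => G_neq0 G_closed yG x.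
apply/andP/andP => [[xG xy] | [xy x_neq0]]; first by split; last exact: G_neq0.
by split; first exact: G_closed xy x_neq0.
Qed.

Lemma sum_w_faces (y : {set T}) : y \in G -> \sum_(x in G | x \subset y) w x = 1.
Proof.
move=> yG; rewrite (eq_bigl _ _ (complex_subsetE yG)).
have := sum_subset_sign_eq0 int (proj1 complexG y yG).
rewrite (bigD1 set0) ?sub0set //= cards0 expr0 => /eqP; rewrite addr_eq0 => /eqP ->.
by rewrite -sumrN; apply: eq_bigr => x /andP[_ /w_nonempty].
Qed.

End Faces.

Theorem mainTheorem1 (T : finType) (G : {set {set T}}) :
  is_complex G ->
  \sum_(x in G) w x * wS (star G x) = wS G.
Proof.
move=> complexG.
under eq_bigr => x _ do rewrite /wS big_distrr /=.
rewrite (exchange_big_dep (mem G)) /=; last by move=> x y _; rewrite inE => /andP[].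
apply: eq_bigr => y yG.
rewrite -[RHS]mulr1 -(sum_w_faces complexG yG) big_distrr /=.
by apply: eq_big => [x | x _]; rewrite ?inE ?yG // mulrC.
Qed.
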